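(* Let $r \ge 3$ and $0 \le k \le n$ be integers, and put $m = \lceil \frac{(r-2)k}{r-1} \rceil$. Let $g^{1\text{-}\mathrm{ff}}_r(n,k)$ be the maximum cardinality of a family $\mathcal{F} \subseteq \binom{[n]}{k}$ containing no $1$-focal family of size $r$. Then $$g^{1\text{-}\mathrm{ff}}_r(n,k) \le (r-1)\,\frac{\binom{n}{m}}{\binom{k}{m}}.$$
   Context: $\binom{[n]}{k}$ is the family of all $k$-element subsets of $[n]=\{1,\dots,n\}$; sets are identified with their characteristic vectors in $\{0,1\}^n$. For $b \in \{0,1\}$, a family $x^{(0)}, x^{(1)}, \dots, x^{(r-1)}$ of $r$ distinct vectors in $\{0,1\}^n$ is $b$-focal with focus $x^{(0)}$ if for every coordinate $i \in [n]$ with $x^{(0)}_i = b$, at least $r-2$ of the $r-1$ entries $x^{(1)}_i, \dots, x^{(r-1)}_i$ are equal to $b$. A family contains a $b$-focal family of size $r$ if some $r$ distinct members, with some choice of focus among them, form a $b$-focal family. *)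

From mathcomp Require Import all_boot all_order all_algebra.
Set Implicit Arguments. Unset Strict Implicit. Unset Printing Implicit Defensive.

(* Subsets of [n] = {1..n} are modelled as {set 'I_n}; the characteristic
   vector of X has X_i = 1 iff i \in X. *)

Definition one_focal (n r : nat) (S : {set {set 'I_n}}) (X0 : {set 'I_n}) : bool :=
  [&& #|S| == r, X0 \in S &
      [forall i : 'I_n, (i \in X0) ==> (r - 2 <= #|[set Y in S :\ X0 | i \in Y]|)]].

Definition contains_1ff (n r : nat) (F : {set {set 'I_n}}) : bool :=
  [exists S : {set {set 'I_n}}, exists X0 : {set 'I_n},
    (S \subset F) && one_focal r S X0].

Definition good_family (n k r : nat) (F : {set {set 'I_n}}) : bool :=
  [forall X in F, #|X| == k] && ~~ contains_1ff r F.

Definition g1ff (r n k : nat) : nat :=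
  \max_(F : {set {set 'I_n}} | good_family k r F) #|F|.

Definition ceil_div (a b : nat) : nat := (a + b - 1) %/ b.

From mathcomp Require Import all_boot all_order all_algebra.
From mathcomp Require Import zify.
Set Implicit Arguments. Unset Strict Implicit. Unset Printing Implicit Defensive.

(* For X in F call an m-subset of X private if no other member of F contains
   it. Distinct members have distinct private sets, so the numbers of private
   sets sum to at most C(n, m), and it suffices to show that every X has at
   least C(k, m) / (r - 1) of them.  Pass to complements of size t = k - m in
   X: call a t-subset T of X blocking if X \ Y is contained in T for some
   other Y in F; if T is not blocking then X \ T is private.  Disjoint
   blocking sets T_1, ..., T_(r-1) with X \ Y_j contained in T_j leave every
   point of X outside at most one Y_j, so X, Y_1, ..., Y_(r-1) would be a
   1-focal family with focus X.  So X contains no r - 1 pairwise disjoint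
   blocking t-sets, and as (r - 1) t <= k by the choice of m, a double count
   over pairs of disjoint blocking and non-blocking t-sets shows, by
   induction on r - 1, that at least a 1/(r - 1) fraction of the t-subsets of
   X are not blocking. *)

Lemma sum_bool_card (T : finType) (A : {set T}) (b : pred T) :
  \sum_(x in A) (b x : nat) = #|[set x in A | b x]|.
Proof. by rewrite -sum1dep_card big_mkcondr. Qed.

Section DisjointPacking.
Variables (T : finType) (t : nat) (bad : pred {set T}).

Fixpoint packing (j : nat) (S : {set T}) : bool :=
  if j is j'.+1 then
    [exists A : {set T}, [&& A \subset S, #|A| == t, bad A & packing j' (S :\: A)]]
  else true.

Definition bad_draws (S : {set T}) :=
  [set A : {set T} | A \subset S & (#|A| == t) && bad A].
Definition free_draws (S : {set T}) :=
  [set A : {set T} | A \subset S & (#|A| == t) && ~~ bad A].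

Lemma card_bad_free_draws (S : {set T}) : #|bad_draws S| + #|free_draws S| = 'C(#|S|, t).
Proof.
rewrite -cards_draws -[RHS](cardsID [set A | bad A]); congr (_ + _); apply: eq_card => A.
  by rewrite !inE andbA andbC.
by rewrite !inE andbA andbC.
Qed.

Lemma bad_draws_le_free j (S : {set T}) :
  0 < 'C(#|S| - t, t) ->
  {in bad_draws S, forall A, 'C(#|S| - t, t) <= j * #|free_draws (S :\: A)|} ->
  #|bad_draws S| <= j * #|free_draws S|.
Proof.
move=> C_gt0 bad_bound; set C := 'C(_, _) in C_gt0 bad_bound.
pose pairs := \sum_(A in bad_draws S) \sum_(B in free_draws S) [disjoint B & A].
have bad_pairs : #|bad_draws S| * C <= j * pairs.
  rewrite /pairs big_distrr /= -sum1_card big_distrl /=.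
  apply: leq_sum => A hA; rewrite mul1n (leq_trans (bad_bound A hA)) // leq_mul2l.
  rewrite sum_bool_card subset_leq_card ?orbT //; apply/subsetP => B.
  by rewrite !inE subsetD -!andbA => /and4P[-> -> -> ->].
have free_pairs : pairs <= #|free_draws S| * C.
  rewrite /pairs exchange_big /= -sum1_card big_distrl /=.
  apply: leq_sum => B; rewrite inE mul1n => /andP[BS /andP[/eqP cardB _]].
  rewrite /C -cardB -cardsDS // -cards_draws sum_bool_card subset_leq_card //.
  apply/subsetP => A; rewrite !inE subsetD disjoint_sym.
  by rewrite cardB; case/andP => /and3P [-> -> _] ->.
rewrite -(leq_pmul2r C_gt0) -mulnA (leq_trans bad_pairs) //.
by rewrite leq_mul2l free_pairs orbT.
Qed.

Lemma bin_le_free_draws j (S : {set T}) :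
  0 < j -> j * t <= #|S| -> ~~ packing j S -> 'C(#|S|, t) <= j * #|free_draws S|.
Proof.
elim: j S => [//|[|j] IH] S _ hS no_pack.
  rewrite mul1n -card_bad_free_draws.
  suff -> : bad_draws S = set0 by rewrite cards0.
  apply/setP=> A; rewrite !inE; apply/negP => /andP[AS /andP[cardA badA]].
  by case/negP: no_pack; apply/existsP; exists A; rewrite AS cardA badA.
rewrite -card_bad_free_draws mulSn addnC leq_add2l.
apply: bad_draws_le_free => [|A]; first by rewrite bin_gt0; lia.
rewrite inE => /andP[AS /andP[/eqP cardA badA]].
have cardSA : #|S :\: A| = #|S| - t by rewrite cardsDS // cardA.
rewrite -cardSA; apply: IH => //; first by rewrite cardSA; lia.
apply: contra no_pack => pack_SA; apply/existsP; exists A.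
by rewrite AS cardA eqxx badA.
Qed.

End DisjointPacking.

Section NoOneFocal.
Variables (n k r : nat) (F : {set {set 'I_n}}).
Hypothesis F_uniform : {in F, forall X : {set 'I_n}, #|X| = k}.

Definition blocking (X T : {set 'I_n}) : bool :=
  [exists Y in F, (Y != X) && (X :\: Y \subset T)].

Lemma uniform_setD_neq0 X Y : X \in F -> Y \in F -> Y != X -> X :\: Y != set0.
Proof.
move=> XF YF; apply: contraNneq => /eqP; rewrite setD_eq0 => XY.
by rewrite eq_sym eqEcard XY (F_uniform XF) (F_uniform YF) leqnn.
Qed.

Lemma packing_blocking_focal t X j S : X \in F -> packing t (blocking X) j S ->
  exists G : {set {set 'I_n}},
    [/\ G \subset F :\ X, #|G| = j, {in G, forall Y, X :\: Y \subset S} &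
        {in X, forall i, #|[set Y in G | i \notin Y]| <= 1}].
Proof.
move=> XF; elim: j S => [|j IH] S /=.
  move=> _; exists set0; split => [||Y|i _]; rewrite ?sub0set ?cards0 ?inE //.
  by rewrite (_ : [set _ in _ | _] = set0) ?cards0 //; apply/setP => Y; rewrite !inE.
case/existsP => T /and4P[TS _ /existsP[Y /and3P[YF YX XYT]] pack_ST].
have [G [GF cardG GS G_miss]] := IH _ pack_ST.
have YG : Y \notin G.
  apply/negP => /GS /subsetDP[_ /disjoint_setI0].
  by rewrite (setIidPl XYT); apply/eqP/uniform_setD_neq0.
exists (Y |: G); split.
- by rewrite subUset sub1set !inE YX YF GF.
- by rewrite cardsU1 YG cardG.
- move=> Z /setU1P[-> | /GS ZS]; first exact: subset_trans XYT TS.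
  exact: subset_trans ZS (subsetDl _ _).
move=> i iX; have [iY | iY] := boolP (i \in Y).
  apply: leq_trans (G_miss i iX); apply: subset_leq_card; apply/subsetP => Z.
  by rewrite !inE => /andP[/orP[/eqP -> | -> ->]] //; rewrite iY.
rewrite -(cards1 Y) subset_leq_card //; apply/subsetP => Z.
rewrite !inE => /andP[/orP[-> // | ZG] iZ]; exfalso.
have iT : i \in T by apply: (subsetP XYT); rewrite inE iY iX.
by have := subsetP (GS Z ZG) i; rewrite !inE iZ iX iT => /(_ isT).
Qed.

Hypothesis no_focal : ~~ contains_1ff r F.

Lemma no_focal_no_packing t X : 0 < r -> X \in F -> ~~ packing t (blocking X) (r - 1) X.
Proof.
move=> r_gt0 XF; apply/negP => /(packing_blocking_focal XF)[G [GF cardG _ G_miss]].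
have XG : X \notin G by apply/negP => /(subsetP GF); rewrite !inE eqxx.
case/negP: no_focal; apply/existsP; exists (X |: G); apply/existsP; exists X.
rewrite subUset sub1set XF (subset_trans GF (subD1set _ _)) /=.
rewrite /one_focal cardsU1 XG cardG setU11 andbA andbT; apply/andP; split; first by apply/eqP; lia.
apply/forallP => i; apply/implyP => iX; rewrite setU1K //.
pose iY := [set Y : {set 'I_n} | i \in Y].
have miss : #|G :\: iY| <= 1.
  by rewrite (eq_card (B := [set Y in G | i \notin Y])) ?G_miss // => Y; rewrite !inE andbC.
rewrite (eq_card (B := G :&: iY)) => [|Y]; last by rewrite !inE.
have := cardsID iY G; rewrite cardG; move: miss.
set a := #|G :\: iY|; set b := #|G :&: iY|; clearbody a b; lia.
Qed.

Definition private_draws (m : nat) (X : {set 'I_n}) := [set M : {set 'I_n} |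
  [&& M \subset X, #|M| == m & [forall Y in F, (Y != X) ==> ~~ (M \subset Y)]]].

Lemma free_draws_le_private m X : X \in F -> m <= k ->
  #|free_draws (k - m) (blocking X) X| <= #|private_draws m X|.
Proof.
move=> XF mk; rewrite -(card_in_imset (f := fun T => X :\: T)).
  apply: subset_leq_card; apply/subsetP => _ /imsetP[T + ->].
  rewrite !inE => /andP[TX /andP[/eqP cardT not_blocking]].
  rewrite subsetDl cardsDS // F_uniform // cardT subKn // eqxx /=.
  apply/forallP => Y; apply/implyP => YF; apply/implyP => YX.
  apply: contra not_blocking => XTY; apply/existsP; exists Y; rewrite YF YX /=.
  apply/subsetP => x; rewrite !inE => /andP[xY xX]; apply: contraR xY => xT.
  by apply: (subsetP XTY); rewrite !inE xT xX.
move=> T1 T2; rewrite !inE => /andP[T1X _] /andP[T2X _] eq_diff.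
have : X :\: (X :\: T1) = X :\: (X :\: T2) by rewrite eq_diff.
by rewrite !setDDr setDv !set0U (setIidPr T1X) (setIidPr T2X).
Qed.

Lemma bin_le_private_draws m X : 1 < r -> X \in F -> m <= k -> (r - 1) * (k - m) <= k ->
  'C(k, m) <= (r - 1) * #|private_draws m X|.
Proof.
move=> r_gt1 XF mk fit.
have no_pack := no_focal_no_packing (k - m) (ltnW r_gt1) XF.
have fitX : (r - 1) * (k - m) <= #|X| by rewrite F_uniform.
have r1_gt0 : 0 < r - 1 by rewrite subn_gt0.
have := bin_le_free_draws r1_gt0 fitX no_pack.
rewrite F_uniform // bin_sub // => /leq_trans; apply.
by rewrite leq_mul2l free_draws_le_private ?orbT.
Qed.

Lemma sum_private_draws m : \sum_(X in F) #|private_draws m X| <= 'C(n, m).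
Proof.
set D := [set M : {set 'I_n} | #|M| == m].
have cardD : #|D| = 'C(n, m) by rewrite card_draws card_ord.
have card_private X : #|private_draws m X| = \sum_(M in D) (M \in private_draws m X).
  by rewrite sum_bool_card; apply: eq_card => M; rewrite !inE; case: eqP; rewrite ?andbF.
rewrite (eq_bigr _ (fun X _ => card_private X)) exchange_big /= -cardD -sum1_card.
apply: leq_sum => M _; rewrite sum_bool_card; apply/card_le1_eqP => X1 X2.
rewrite !inE => /andP[X1F /and3P[_ _ /forallP X1_private]] /andP[X2F /and3P[MX2 _ _]].
apply/eqP; apply: contraLR (X1_private X2) => X21.
by rewrite X2F X21 MX2.
Qed.

Lemma card_mul_bin_le m : 1 < r -> m <= k -> (r - 1) * (k - m) <= k ->
  #|F| * 'C(k, m) <= (r - 1) * 'C(n, m).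
Proof.
move=> r_gt1 mk fit; rewrite -sum_nat_const.
apply: leq_trans (_ : \sum_(X in F) (r - 1) * #|private_draws m X| <= _).
  by apply: leq_sum => X XF; apply: bin_le_private_draws.
by rewrite -big_distrr leq_mul2l sum_private_draws orbT.
Qed.

End NoOneFocal.

Lemma ceil_div_mul_bounds a d k : 0 < d -> a <= d ->
  ceil_div (a * k) d <= k /\ d * (k - ceil_div (a * k) d) <= (d - a) * k.
Proof.
move=> d_gt0 ad; rewrite /ceil_div.
have := divn_eq (a * k + d - 1) d; have := ltn_pmod (a * k + d - 1) d_gt0.
set q := _ %/ d; set rho := _ %% d; clearbody q rho; move=> rho_lt def_q.
split; nia.
Qed.

Import GRing.Theory Num.Theory.
Local Open Scope ring_scope.

Theorem theorem5p2 (r n k : nat) (hr : (3 <= r)%N) (hkn : (k <= n)%N) :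
  let m := ceil_div ((r - 2) * k) (r - 1) in
  (g1ff r n k)%:R <= (r - 1)%:R * 'C(n, m)%:R / 'C(k, m)%:R :> rat.
Proof.
cbv zeta; set m := ceil_div _ _.
have r1_gt0 : (0 < r - 1)%N by rewrite subn_gt0 ltnW.
have [mk fit] := ceil_div_mul_bounds k r1_gt0 (leq_sub2l r (isT : 1 <= 2)%N).
have r1_sub_r2 : (r - 1 - (r - 2) = 1)%N by lia.
rewrite r1_sub_r2 mul1n in fit.
have Ckm_gt0 : (0 < 'C(k, m))%N by rewrite bin_gt0.
have bound : (g1ff r n k * 'C(k, m) <= (r - 1) * 'C(n, m))%N.
  rewrite -leq_divRL //; apply/bigmax_leqP => F /andP[/forall_inP F_uniform no_focal].
  have {}F_uniform : {in F, forall X : {set 'I_n}, #|X| = k} by move=> X /F_uniform/eqP.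
  by rewrite leq_divRL // (card_mul_bin_le F_uniform no_focal (ltnW hr) mk fit).
by rewrite ler_pdivlMr ?ltr0n // -!natrM ler_nat.
Qed.
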